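(* For every $n\ge1$, $$\tilde S^{\,n-1}_{e_0}\big(e_+(z)\big)=\prod_{k=2}^n\big(1-q^{-2(k-1)}\big)\,e_+(z)^n,\qquad S^{\,n-1}_{e_0}\big(e_-(z)\big)=\prod_{k=2}^n\big(1-q^{2(k-1)}\big)\,e_-(z)^n,$$ $$S^{\,n-1}_{f_0}\big(f_+(z)\big)=\prod_{k=2}^n\big(q^{-2(k-1)}-1\big)\,f_+(z)^n,\qquad \tilde S^{\,n-1}_{f_0}\big(f_-(z)\big)=\prod_{k=2}^n\big(q^{2(k-1)}-1\big)\,f_-(z)^n.$$
   Context: $U=U_q(\widehat{\mathfrak{sl}}_2)$ in the Drinfeld new realization: currents $e(z)=\sum_ne_nz^{-n}$, $f(z)=\sum_nf_nz^{-n}$ with $(z-q^2w)e(z)e(w)=(q^2z-w)e(w)e(z)$, $(z-q^{-2}w)f(z)f(w)=(q^{-2}z-w)f(w)f(z)$, and $k=\psi^+_0$ with $ke_nk^{-1}=q^2e_n$, $kf_nk^{-1}=q^{-2}f_n$; $q$ not a root of unity. Half-currents: $e_+(z)=\sum_{n\ge0}e_nz^{-n}$, $e_-(z)=-\sum_{n<0}e_nz^{-n}$, $f_+(z)=\sum_{n>0}f_nz^{-n}$, $f_-(z)=-\sum_{n\le0}f_nz^{-n}$; $e_\pm(z)^n$, $f_\pm(z)^n$ are powers as formal series. Screening operators (applied coefficientwise): $S_{e_0}(x)=e_0x-kxk^{-1}e_0$, $S_{f_0}(x)=xf_0-f_0kxk^{-1}$, $\tilde S_{e_0}(x)=xe_0-e_0k^{-1}xk$,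 $\tilde S_{f_0}(x)=f_0x-k^{-1}xkf_0$. Empty products equal $1$. *)

From mathcomp Require Import all_boot all_order all_algebra.
Set Implicit Arguments. Unset Strict Implicit. Unset Printing Implicit Defensive.
Import GRing.Theory.
Local Open Scope ring_scope.

(* A formal series in one variable (z^{-1} or z) is given by its coefficient
   sequence c : nat -> A (c m = coefficient of the m-th power of the variable).
   [ser_pow c n m] is the m-th coefficient of the n-th power of the series
   (Cauchy product, non-commutative coefficients, ordered left to right). *)
Fixpoint ser_pow (A : ringType) (c : nat -> A) (n m : nat) : A :=
  match n with
  | 0 => (m == 0)%:R
  | n'.+1 => \sum_(i < m.+1) c i * ser_pow c n' (m - i)
  end.

(* e_+(z) = sum_{n>=0} e_n z^{-n}: coefficient of z^{-m}. *)
Definition e_plus (A : ringType) (e : int -> A) (m : nat) : A := e (Posz m).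
(* e_-(z) = - sum_{n<0} e_n z^{-n}: coefficient of z^{m}. *)
Definition e_minus (A : ringType) (e : int -> A) (m : nat) : A :=
  if m is 0 then 0 else - e (- Posz m).
(* f_+(z) = sum_{n>0} f_n z^{-n}: coefficient of z^{-m}. *)
Definition f_plus (A : ringType) (f : int -> A) (m : nat) : A :=
  if m is 0 then 0 else f (Posz m).
(* f_-(z) = - sum_{n<=0} f_n z^{-n}: coefficient of z^{m}. *)
Definition f_minus (A : ringType) (f : int -> A) (m : nat) : A :=
  - f (- Posz m).

Definition S_e0 (A : ringType) (e : int -> A) (k kinv x : A) : A :=
  e 0 * x - k * x * kinv * e 0.
Definition S_f0 (A : ringType) (f : int -> A) (k kinv x : A) : A :=
  x * f 0 - f 0 * (k * x * kinv).
Definition St_e0 (A : ringType) (e : int -> A) (k kinv x : A) : A :=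
  x * e 0 - e 0 * (kinv * x * k).
Definition St_f0 (A : ringType) (f : int -> A) (k kinv x : A) : A :=
  f 0 * x - kinv * x * k * f 0.

(* Coefficientwise form of (z - q^2 w) e(z)e(w) = (q^2 z - w) e(w)e(z),
   coefficient of z^{-a} w^{-b}. *)
Definition ee_rel (K : fieldType) (A : algType K) (q : K) (e : int -> A) :=
  forall a b : int,
    e (a + 1) * e b - q ^+ 2 *: (e a * e (b + 1))
    = q ^+ 2 *: (e b * e (a + 1)) - e (b + 1) * e a.

(* Coefficientwise form of (z - q^{-2} w) f(z)f(w) = (q^{-2} z - w) f(w)f(z). *)
Definition ff_rel (K : fieldType) (A : algType K) (q : K) (f : int -> A) :=
  forall a b : int,
    f (a + 1) * f b - (q ^+ 2)^-1 *: (f a * f (b + 1))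
    = (q ^+ 2)^-1 *: (f b * f (a + 1)) - f (b + 1) * f a.

(* Each of the four screening operators is a twisted derivation,
   D (x y) = s1(x) D(y) + D(x) s2(y), where one of s1, s2 is the identity and
   the other is conjugation by k, which rescales the current by s = q^(+-2).
   Summing the exchange relation of the current along an antidiagonal shows that
   D maps the current c to beta (1 - s) c^2.  The twisted Leibniz rule then
   gives D (c^n) = beta (1 - s^n) c^(n+1), and iterating D produces the
   product of these factors. *)

From mathcomp Require Import all_boot all_order all_algebra.
From mathcomp Require Import ring zify.
Import GRing.Theory.
Set Implicit Arguments. Unset Strict Implicit. Unset Printing Implicit Defensive.
Local Open Scope ring_scope.

Section SeriesPowers.
Variables (A : nzRingType) (c : nat -> A).

Lemma ser_powS n m : ser_pow c n.+1 m = \sum_(i < m.+1) c i * ser_pow c n (m - i).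
Proof. by []. Qed.

(* Truncation at degree [M] turns series powers into polynomial powers, whose
   associativity gives [ser_powD]. *)
Lemma ser_pow_coef n m M : (m <= M)%N ->
  ser_pow c n m = ((\poly_(i < M.+1) c i) ^+ n)`_m.
Proof.
elim: n m => [|n IH] m hm; first by rewrite expr0 coef1.
rewrite ser_powS exprS coefM; apply: eq_bigr => i _.
have hi : (i < M.+1)%N by have := ltn_ord i; lia.
by rewrite coef_poly hi IH //; lia.
Qed.

Lemma ser_powD a b m :
  ser_pow c (a + b) m = \sum_(i < m.+1) ser_pow c a i * ser_pow c b (m - i).
Proof.
rewrite (ser_pow_coef _ (leqnn m)) exprD coefM; apply: eq_bigr => i _.
by have := ltn_ord i => hi; rewrite -!(@ser_pow_coef _ _ m) //; lia.
Qed.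

Lemma ser_pow1 m : ser_pow c 1 m = c m.
Proof. by rewrite (ser_pow_coef _ (leqnn m)) expr1 coef_poly ltnSn. Qed.

Lemma ser_pow2 m : ser_pow c 2 m = \sum_(i < m.+1) c i * c (m - i)%N.
Proof. by rewrite ser_powS; apply: eq_bigr => i _; rewrite ser_pow1. Qed.

End SeriesPowers.

Lemma ser_pow2_drop0 (A : nzRingType) (c g : nat -> A) m : c 0 = 0 ->
    (forall i, (0 < i)%N -> c i = g i) -> (0 < m)%N ->
  ser_pow c 2 m = ser_pow g 2 m - g 0 * g m - g m * g 0.
Proof.
case: m => // m c0 cg _; rewrite !ser_pow2.
rewrite big_ord_recl big_ord_recr [in RHS]big_ord_recl [in RHS]big_ord_recr /=.
rewrite subn0 subnn c0 mul0r mulr0 add0r addr0 /bump /= add1n.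
rewrite [g 0 * _ + _]addrC addrK addrK.
apply: eq_bigr => i _; rewrite !cg //; have := ltn_ord i; lia.
Qed.

Lemma ser_pow_eigen (K : fieldType) (A : algType K) (c : nat -> A)
    (sigma : A -> A) (s : K) :
    {morph sigma : x y / x + y} -> {morph sigma : x y / x * y} -> sigma 1 = 1 ->
    (forall m, sigma (c m) = s *: c m) ->
  forall n m, sigma (ser_pow c n m) = s ^+ n *: ser_pow c n m.
Proof.
move=> sigmaD sigmaM sigma1 sigma_c.
have sigma0 : sigma 0 = 0 by apply: (addrI (sigma 0)); rewrite -sigmaD !addr0.
elim=> [|n IH] m /=; first by case: (m == 0)%N; rewrite scale1r.
rewrite (big_morph sigma sigmaD sigma0) scaler_sumr; apply: eq_bigr => i _.
by rewrite sigmaM sigma_c IH -scalerAr -scalerAl scalerA exprS mulrC.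
Qed.

Section TwistedDerivation.
Variables (K : fieldType) (A : algType K) (c : nat -> A).
Variables (D sigma1 sigma2 : A -> A) (s1 s2 alpha : K) (L : nat -> K).
Hypotheses (DD : {morph D : x y / x + y}) (D1 : D 1 = 0).
Hypothesis DM : forall x y, D (x * y) = sigma1 x * D y + D x * sigma2 y.
Hypothesis sigma1_c : forall m, sigma1 (c m) = s1 *: c m.
Hypothesis sigma2_pow : forall n m, sigma2 (ser_pow c n m) = s2 ^+ n *: ser_pow c n m.
Hypothesis D_c : forall m, D (c m) = alpha *: ser_pow c 2 m.
Hypotheses (L0 : L 0 = 0) (LS : forall n, L n.+1 = s1 * L n + alpha * s2 ^+ n).

Lemma twisted_derivation_ser_pow n m : D (ser_pow c n m) = L n *: ser_pow c n.+1 m.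
Proof.
have D0 : D 0 = 0 by apply: (addrI (D 0)); rewrite -DD !addr0.
elim: n m => [|n IH] m; first by rewrite L0 scale0r /=; case: (m == 0)%N.
rewrite ser_powS (big_morph D DD D0).
under eq_bigr do rewrite DM IH D_c sigma1_c sigma2_pow.
rewrite LS scalerDl {1}(ser_powS c n.+1 m) -(add2n n) ser_powD.
rewrite !scaler_sumr -big_split; apply: eq_bigr => i _.
by rewrite -!scalerAr -!scalerAl !scalerA (mulrC (L n)) (mulrC (s2 ^+ n)).
Qed.

End TwistedDerivation.

Lemma iter_ser_pow (K : fieldType) (A : algType K) (c : nat -> A) (D : A -> A)
    (L : nat -> K) :
    scalable D -> (forall n m, D (ser_pow c n m) = L n *: ser_pow c n.+1 m) ->
  forall n m, (0 < n)%N ->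
  iter n.-1 D (c m) = (\prod_(1 <= j < n) L j) *: ser_pow c n m.
Proof.
move=> DZ DP [//|n] m _; elim: n => [|n IH].
  by rewrite big_geq // scale1r ser_pow1.
by rewrite iterS IH DZ DP scalerA -big_nat_recr.
Qed.

Section Screening.
Variables (K : fieldType) (A : algType K) (a k kinv : A) (c : nat -> A) (s beta : K).
Hypotheses (k_kinv : k * kinv = 1) (kinv_k : kinv * k = 1).
Hypothesis conj_c : forall m, k * c m * kinv = s *: c m.

Let conj_pow n m : k * ser_pow c n m * kinv = s ^+ n *: ser_pow c n m.
Proof.
apply: (ser_pow_eigen (sigma := fun x => k * x * kinv)) => // [x y|x y|].
- by rewrite mulrDr mulrDl.
- by rewrite !mulrA -[k * x * kinv * k]mulrA kinv_k mulr1.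
- by rewrite mulr1.
Qed.

Lemma iter_right_screening :
    (forall m, c m * a - a * (k * c m * kinv) = (beta * (1 - s)) *: ser_pow c 2 m) ->
  forall n m, (0 < n)%N ->
  iter n.-1 (fun x => x * a - a * (k * x * kinv)) (c m)
  = (\prod_(1 <= j < n) (beta * (1 - s ^+ j))) *: ser_pow c n m.
Proof.
move=> D_c; apply: iter_ser_pow.
  by move=> b x; rewrite scalerBr -?scalerAr -?scalerAl -?scalerAr -?scalerAl.
apply: (@twisted_derivation_ser_pow _ _ c (fun x => x * a - a * (k * x * kinv))
  id (fun x => k * x * kinv) 1 s (beta * (1 - s)) (fun n => beta * (1 - s ^+ n))).
- by move=> x y; rewrite !(mulrDl, mulrDr) opprD addrACA.
- by rewrite mulr1 k_kinv mulr1 mul1r subrr.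
- move=> x y /=; rewrite !mulrBr !mulrBl !mulrA -[a * k * x * kinv * k]mulrA.
  by rewrite kinv_k mulr1 addrA subrK.
- by move=> m; rewrite scale1r.
- exact: conj_pow.
- exact: D_c.
- by rewrite expr0 subrr mulr0.
- by move=> n; rewrite exprS; ring.
Qed.

Lemma iter_left_screening :
    (forall m, a * c m - k * c m * kinv * a = (beta * (1 - s)) *: ser_pow c 2 m) ->
  forall n m, (0 < n)%N ->
  iter n.-1 (fun x => a * x - k * x * kinv * a) (c m)
  = (\prod_(1 <= j < n) (beta * (1 - s ^+ j))) *: ser_pow c n m.
Proof.
move=> D_c; apply: iter_ser_pow.
  by move=> b x; rewrite scalerBr -?scalerAr -?scalerAl -?scalerAr -?scalerAl.
apply: (@twisted_derivation_ser_pow _ _ c (fun x => a * x - k * x * kinv * a)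
  (fun x => k * x * kinv) id s 1 (beta * (1 - s)) (fun n => beta * (1 - s ^+ n))).
- by move=> x y; rewrite !(mulrDl, mulrDr) opprD addrACA.
- by rewrite !mulr1 k_kinv mul1r subrr.
- move=> x y /=; rewrite !mulrBr !mulrBl !mulrA -[k * x * kinv * k]mulrA kinv_k mulr1.
  by rewrite [RHS]addrC addrA subrK.
- exact: conj_c.
- by move=> n m; rewrite expr1n scale1r.
- exact: D_c.
- by rewrite expr0 subrr mulr0.
- by move=> n; rewrite exprS expr1n; ring.
Qed.

End Screening.

(* [(u z - v w) g(z) g(w) = (v z - u w) g(w) g(z)] for [g(z) = sum_a g_a z^-a]. *)
Definition quad_rel (K : fieldType) (A : algType K) (u v : K) (g : nat -> A) :=
  forall a b, u *: (g a.+1 * g b) - v *: (g a * g b.+1)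
              = v *: (g b * g a.+1) - u *: (g b.+1 * g a).

(* [ee_rel q e] and [ff_rel q f] unfold to [int_quad_rel (q ^+ 2) e] and
   [int_quad_rel (q ^+ 2)^-1 f]. *)
Definition int_quad_rel (K : fieldType) (A : algType K) (Q : K) (e : int -> A) :=
  forall a b : int,
    e (a + 1) * e b - Q *: (e a * e (b + 1))
    = Q *: (e b * e (a + 1)) - e (b + 1) * e a.

Lemma quad_rel_nonneg (K : fieldType) (A : algType K) (Q : K) (e : int -> A) :
  int_quad_rel Q e -> quad_rel 1 Q (fun m => e (Posz m)).
Proof.
move=> R a b; have := R (Posz a) (Posz b).
have S n : (Posz n + 1)%R = Posz n.+1 by lia.
by rewrite !S !scale1r.
Qed.

Lemma quad_rel_nonpos (K : fieldType) (A : algType K) (Q : K) (e : int -> A) :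
  int_quad_rel Q e -> quad_rel Q 1 (fun m => e (- Posz m)).
Proof.
move=> R a b; have := R (- Posz a.+1) (- Posz b.+1).
have S n : (- Posz n.+1 + 1)%R = - Posz n by lia.
by rewrite !S !scale1r => /(congr1 -%R); rewrite !opprB.
Qed.

(* Summing the relation along an antidiagonal gives [X = - X] for
   [X := u S1 - v S2]; hence [X = 0] in characteristic other than 2. *)
Lemma quad_rel_ser_pow2 (K : fieldType) (A : algType K) (u v : K) (g : nat -> A) :
    (2 : K) != 0 -> quad_rel u v g ->
  forall m, (u - v) *: ser_pow g 2 m = u *: (g 0 * g m) - v *: (g m * g 0).
Proof.
move=> h2 R [|m]; first by rewrite ser_pow2 big_ord1 scalerBl.
rewrite ser_pow2.
pose S1 := \sum_(i < m.+1) g i.+1 * g (m - i)%N.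
pose S2 := \sum_(i < m.+1) g i * g (m - i)%N.+1.
have sqE1 : \sum_(i < m.+2) g i * g (m.+1 - i)%N = S1 + g 0 * g m.+1.
  by rewrite big_ord_recl subn0 addrC.
have sqE2 : \sum_(i < m.+2) g i * g (m.+1 - i)%N = S2 + g m.+1 * g 0.
  rewrite big_ord_recr /= subnn; congr (_ + _); apply: eq_bigr => i _.
  by have := ltn_ord i => hi; rewrite subSn.
have sum_rev (F : nat -> nat -> A) :
    \sum_(i < m.+1) F (m - i)%N i = \sum_(i < m.+1) F i (m - i)%N.
  rewrite (reindex_inj rev_ord_inj) /=; apply: eq_bigr => i _.
  by have := ltn_ord i => hi; rewrite subSS subKn.
have S12_eq0 : u *: S1 - v *: S2 = 0.
  have sumR :
      \sum_(i < m.+1) (u *: (g i.+1 * g (m - i)%N) - v *: (g i * g (m - i)%N.+1))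
    = \sum_(i < m.+1) (v *: (g (m - i)%N * g i.+1) - u *: (g (m - i)%N.+1 * g i)).
    by apply: eq_bigr => i _; exact: R.
  rewrite !sumrB -!scaler_sumr (sum_rev (fun i j => g i * g j.+1))
    (sum_rev (fun i j => g i.+1 * g j)) -/S1 -/S2 in sumR.
  have : (2 : K) *: (u *: S1 - v *: S2) = 0.
    by rewrite scaler_nat mulr2n {2}sumR addrC subrKA subrr.
  by move/eqP; rewrite scaler_eq0 (negPf h2) => /eqP.
by rewrite scalerBl {1}sqE1 sqE2 !scalerDr opprD addrACA S12_eq0 add0r.
Qed.

Lemma quad_rel_opp (K : fieldType) (A : algType K) (u v : K) (g : nat -> A) :
  quad_rel u v g -> quad_rel u v (fun m => - g m).
Proof. by move=> R a b; rewrite !mulrNN. Qed.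

Lemma quad_rel_ser_pow2_drop0 (K : fieldType) (A : algType K) (u v : K)
    (c g : nat -> A) m :
    (2 : K) != 0 -> quad_rel u v g ->
    c 0 = 0 -> (forall i, (0 < i)%N -> c i = g i) -> (0 < m)%N ->
  (u - v) *: ser_pow c 2 m = v *: (g 0 * g m) - u *: (g m * g 0).
Proof.
move=> h2 R c0 cg hm.
rewrite (ser_pow2_drop0 c0 cg hm) !scalerBr (quad_rel_ser_pow2 h2 R) !scalerBl.
set a := u *: _; set b := v *: (g m * _).
by rewrite [a - b]addrC addrKA opprK [- b + _]addrC opprB addrA subrK addrC.
Qed.

Lemma conj_inv_eigen (K : fieldType) (A : algType K) (k kinv x : A) (a : K) :
    k * kinv = 1 -> kinv * k = 1 -> a != 0 ->
  k * x * kinv = a *: x -> kinv * x * k = a^-1 *: x.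
Proof.
move=> k_kinv kinv_k a0 Hx.
have E : kinv * (k * x * kinv) * k = x.
  by rewrite !mulrA kinv_k mul1r -mulrA kinv_k mulr1.
by rewrite -{2}E Hx -scalerAr -scalerAl scalerA mulVf // scale1r.
Qed.

Section HalfCurrents.
Variables (K : fieldType) (A : algType K) (q : K) (k kinv : A).
Hypotheses (two_neq0 : (2 : K) != 0) (q_neq0 : q != 0).
Hypotheses (k_kinv : k * kinv = 1) (kinv_k : kinv * k = 1).

Let q2_neq0 : q ^+ 2 != 0. Proof. exact: expf_neq0. Qed.

Lemma iter_St_e0_e_plus (e : int -> A) :
    (forall n : int, k * e n * kinv = q ^+ 2 *: e n) -> int_quad_rel (q ^+ 2) e ->
  forall n m, (0 < n)%N ->
  iter n.-1 (St_e0 e k kinv) (e_plus e m)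
  = (\prod_(2 <= j < n.+1) (1 - (q ^+ (2 * (j - 1)))^-1)) *: ser_pow (e_plus e) n m.
Proof.
move=> conj_e R n m hn.
have conj_c i : kinv * e_plus e i * k = (q ^+ 2)^-1 *: e_plus e i.
  exact: conj_inv_eigen k_kinv kinv_k q2_neq0 (conj_e _).
have D_c i : e_plus e i * e 0 - e 0 * (kinv * e_plus e i * k)
             = (1 * (1 - (q ^+ 2)^-1)) *: ser_pow (e_plus e) 2 i.
  have H : (1 - q ^+ 2) *: ser_pow (e_plus e) 2 i
           = 1 *: (e 0 * e_plus e i) - q ^+ 2 *: (e_plus e i * e 0).
    exact: quad_rel_ser_pow2 two_neq0 (quad_rel_nonneg R) i.
  have -> : 1 * (1 - (q ^+ 2)^-1) = - (q ^+ 2)^-1 * (1 - q ^+ 2) by field.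
  rewrite conj_c -scalerAr -scalerA H scale1r scalerBr scalerA mulNr mulVf //.
  by rewrite scaleN1r opprK scaleNr addrC.
rewrite (iter_right_screening kinv_k k_kinv conj_c D_c m hn) [in RHS]big_add1 /=.
by congr (_ *: _); apply: eq_bigr => j _; rewrite mul1r subn1 exprVn exprM.
Qed.

Lemma iter_S_f0_f_plus (f : int -> A) :
    (forall n : int, k * f n * kinv = (q ^+ 2)^-1 *: f n) ->
    int_quad_rel (q ^+ 2)^-1 f ->
  forall n m, (0 < n)%N ->
  iter n.-1 (S_f0 f k kinv) (f_plus f m)
  = (\prod_(2 <= j < n.+1) ((q ^+ (2 * (j - 1)))^-1 - 1)) *: ser_pow (f_plus f) n m.
Proof.
move=> conj_f R n m hn.
have conj_c i : k * f_plus f i * kinv = (q ^+ 2)^-1 *: f_plus f i.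
  by case: i => [|i] /=; rewrite ?mulr0 ?mul0r ?scaler0 ?conj_f.
have D_c i : f_plus f i * f 0 - f 0 * (k * f_plus f i * kinv)
             = (-1 * (1 - (q ^+ 2)^-1)) *: ser_pow (f_plus f) 2 i.
  case: i => [|i].
    by rewrite ser_pow2 big_ord1 /= !(mul0r, mulr0, scaler0) subrr.
  have H : (1 - (q ^+ 2)^-1) *: ser_pow (f_plus f) 2 i.+1
           = (q ^+ 2)^-1 *: (f 0 * f_plus f i.+1) - 1 *: (f_plus f i.+1 * f 0).
    have R' := quad_rel_nonneg R.
    by apply: quad_rel_ser_pow2_drop0 two_neq0 R' _ _ (ltn0Sn i) => // -[].
  by rewrite conj_c -scalerAr -scalerA scaleN1r H scale1r opprB.
rewrite (iter_right_screening k_kinv kinv_k conj_c D_c m hn) [in RHS]big_add1 /=.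
by congr (_ *: _); apply: eq_bigr => j _; rewrite subn1 exprVn exprM; ring.
Qed.

Lemma iter_S_e0_e_minus (e : int -> A) :
    (forall n : int, k * e n * kinv = q ^+ 2 *: e n) -> int_quad_rel (q ^+ 2) e ->
  forall n m, (0 < n)%N ->
  iter n.-1 (S_e0 e k kinv) (e_minus e m)
  = (\prod_(2 <= j < n.+1) (1 - q ^+ (2 * (j - 1)))) *: ser_pow (e_minus e) n m.
Proof.
move=> conj_e R n m hn.
have conj_c i : k * e_minus e i * kinv = q ^+ 2 *: e_minus e i.
  by case: i => [|i] /=; rewrite ?mulr0 ?mul0r ?scaler0 // mulrN mulNr conj_e scalerN.
have D_c i : e 0 * e_minus e i - k * e_minus e i * kinv * e 0
             = (1 * (1 - q ^+ 2)) *: ser_pow (e_minus e) 2 i.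
  case: i => [|i].
    by rewrite ser_pow2 big_ord1 /= !(mul0r, mulr0, scaler0) subrr.
  have H : (q ^+ 2 - 1) *: ser_pow (e_minus e) 2 i.+1
           = 1 *: (- e 0 * e_minus e i.+1) - q ^+ 2 *: (e_minus e i.+1 * - e 0).
    have R' := quad_rel_opp (quad_rel_nonpos R).
    by apply: quad_rel_ser_pow2_drop0 two_neq0 R' _ _ (ltn0Sn i) => // -[].
  have -> : 1 * (1 - q ^+ 2) = - (q ^+ 2 - 1) by rewrite mul1r opprB.
  rewrite conj_c -scalerAl scaleNr H; move: (e_minus e i.+1) => c.
  by rewrite scale1r mulNr mulrN scalerN opprB opprK addrC.
rewrite (iter_left_screening k_kinv kinv_k conj_c D_c m hn) [in RHS]big_add1 /=.
by congr (_ *: _); apply: eq_bigr => j _; rewrite mul1r subn1 exprM.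
Qed.

Lemma iter_St_f0_f_minus (f : int -> A) :
    (forall n : int, k * f n * kinv = (q ^+ 2)^-1 *: f n) ->
    int_quad_rel (q ^+ 2)^-1 f ->
  forall n m, (0 < n)%N ->
  iter n.-1 (St_f0 f k kinv) (f_minus f m)
  = (\prod_(2 <= j < n.+1) (q ^+ (2 * (j - 1)) - 1)) *: ser_pow (f_minus f) n m.
Proof.
move=> conj_f R n m hn.
have conj_c i : kinv * f_minus f i * k = q ^+ 2 *: f_minus f i.
  rewrite /f_minus mulrN mulNr scalerN (conj_inv_eigen k_kinv kinv_k _ (conj_f _)).
    by rewrite invrK.
  by rewrite invr_eq0.
have D_c i : f 0 * f_minus f i - kinv * f_minus f i * k * f 0
             = (-1 * (1 - q ^+ 2)) *: ser_pow (f_minus f) 2 i.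
  have H : ((q ^+ 2)^-1 - 1) *: ser_pow (f_minus f) 2 i
           = (q ^+ 2)^-1 *: (- f 0 * f_minus f i) - 1 *: (f_minus f i * - f 0).
    exact: quad_rel_ser_pow2 two_neq0 (quad_rel_opp (quad_rel_nonpos R)) i.
  have -> : -1 * (1 - q ^+ 2) = - q ^+ 2 * ((q ^+ 2)^-1 - 1) by field.
  rewrite conj_c -scalerAl -scalerA H; move: (f_minus f i) => c.
  rewrite scale1r mulNr mulrN !scalerN opprK scalerDr scalerN scalerA mulNr mulfV //.
  by rewrite scaleN1r opprK scaleNr.
rewrite (iter_left_screening kinv_k k_kinv conj_c D_c m hn) [in RHS]big_add1 /=.
by congr (_ *: _); apply: eq_bigr => j _; rewrite subn1 exprM; ring.
Qed.

End HalfCurrents.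

Theorem mainTheorem5 (K : fieldType) (A : algType K) (q : K)
    (e f : int -> A) (k kinv : A) :
  [pchar K] =i pred0 ->
  q != 0 ->
  (forall r : nat, (0 < r)%N -> q ^+ r != 1) ->
  k * kinv = 1 -> kinv * k = 1 ->
  (forall n : int, k * e n * kinv = q ^+ 2 *: e n) ->
  (forall n : int, k * f n * kinv = (q ^+ 2)^-1 *: f n) ->
  ee_rel q e -> ff_rel q f ->
  forall n : nat, (1 <= n)%N -> forall m : nat,
    [/\ iter n.-1 (St_e0 e k kinv) (e_plus e m)
          = (\prod_(2 <= j < n.+1) (1 - (q ^+ (2 * (j - 1)))^-1))
              *: ser_pow (e_plus e) n m,
        iter n.-1 (S_e0 e k kinv) (e_minus e m)
          = (\prod_(2 <= j < n.+1) (1 - q ^+ (2 * (j - 1))))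
              *: ser_pow (e_minus e) n m,
        iter n.-1 (S_f0 f k kinv) (f_plus f m)
          = (\prod_(2 <= j < n.+1) ((q ^+ (2 * (j - 1)))^-1 - 1))
              *: ser_pow (f_plus f) n m
      & iter n.-1 (St_f0 f k kinv) (f_minus f m)
          = (\prod_(2 <= j < n.+1) (q ^+ (2 * (j - 1)) - 1))
              *: ser_pow (f_minus f) n m].
Proof.
(* Characteristic 0 is only used through [2 != 0]. *)
move=> char0 q_neq0 _ k_kinv kinv_k conj_e conj_f ee ff n n_gt0 m.
have two_neq0 : (2 : K) != 0 by rewrite ((pcharf0P K).1 char0 2).
split.
- exact: iter_St_e0_e_plus.
- exact: iter_S_e0_e_minus.
- exact: iter_S_f0_f_plus.
- exact: iter_St_f0_f_minus.
Qed.
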